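(* Let $F\colon\mathsf{Set}\to\mathsf{Set}$ preserve intersections, and let $(C,c,i_C)$ be an $I$-pointed $F$-coalgebra. For every $k\in\mathbb N$, the $k$-th step $C_k\subseteq C$ of the construction of the reachable part of $(C,c,i_C)$ coincides with the $k$-th step of the construction of the reachable part of its canonical graph $(C,\tau_C\cdot c,i_C)$, regarded as an $I$-pointed $\mathcal P$-coalgebra.
   Context: On $\mathsf{Set}$ use the factorization system (surjective, injective). $F$ preserves intersections: preserves injective maps and intersections of subsets. For a functor $H$ preserving intersections and a map $f\colon X\to HY$, $\ominus_f(S)$ for $S\subseteq X$ is the least $Z\subseteq Y$ such that $f|_S$ factors through $HZ\to HY$ (image of the inclusion). For an $I$-pointed $H$-coalgebra $(C,d,i_C)$ (with $d\colon C\to HC$, $i_C\colon I\to C$), its $k$-th step is defined by $C_0=i_C[I]$ (the image of $i_C$) and $C_{k+1}=\ominus_d(C_k)$. $\mathcal P$ is the power-set functor. For each set $X$, $\tau_X\colon FX\to\mathcal P X$ is $\tau_X(t)=\{x\in X\mid t\notin Fi[F(X\setminus\{x\})]\}$ with $i\colon X\setminus\{x\}\hookrightarrow X$ the inclusion; $\tau_C\cdot c$ is the canonical graph. *)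

(* sets are types, subsets are predicates X -> Prop. *)

Record setFunctor := SetFunctor {
  Fobj :> Type -> Type;
  fmap : forall X Y : Type, (X -> Y) -> Fobj X -> Fobj Y
}.
Arguments fmap s {X Y} _ _.

Definition is_functor (F : setFunctor) : Prop :=
  (forall X (t : F X), fmap F (fun x : X => x) t = t) /\
  (forall X Y Z (f : X -> Y) (g : Y -> Z) (t : F X),
      fmap F (fun x => g (f x)) t = fmap F g (fmap F f t)).

Definition incl {Y : Type} (P : Y -> Prop) : {y : Y | P y} -> Y :=
  fun s => proj1_sig s.

Definition Fimg (F : setFunctor) {Y : Type} (P : Y -> Prop) : F Y -> Prop :=
  fun t => exists s : F {y : Y | P y}, fmap F (incl P) s = t.

Definition injective {X Y : Type} (f : X -> Y) : Prop :=
  forall x x', f x = f x' -> x = x'.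

Definition preserves_intersections (F : setFunctor) : Prop :=
  (forall X Y (f : X -> Y), injective f -> injective (fmap F f)) /\
  (forall (Y : Type) (J : Type) (A : J -> Y -> Prop) (t : F Y),
      Fimg F (fun y => forall j, A j y) t <-> (forall j, Fimg F (A j) t)).

(* ominus_f(S): the least Z subset of Y such that f restricted to S factors
   through F(incl_Z), i.e. the intersection of all such Z. *)
Definition ominus (H : setFunctor) {X Y : Type} (f : X -> H Y) (S : X -> Prop)
  : Y -> Prop :=
  fun y => forall Z : Y -> Prop, (forall x, S x -> Fimg H Z (f x)) -> Z y.

Fixpoint kstep (H : setFunctor) {I C : Type} (d : C -> H C) (i : I -> C)
  (k : nat) : C -> Prop :=
  match k with
  | O => fun x => exists j : I, i j = x
  | S k' => ominus H d (kstep H d i k')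
  end.

Definition Pow : setFunctor :=
  {| Fobj := fun X => X -> Prop;
     fmap := fun X Y (f : X -> Y) (A : X -> Prop) =>
               fun y => exists x, A x /\ f x = y |}.

Definition tau (F : setFunctor) (X : Type) (t : F X) : Pow X :=
  fun x => ~ Fimg F (fun y : X => y <> x) t.

(* For F preserving intersections, [tau F Y t] is the least subset Z of Y with
   t in F Z: t factors through F(Y \ {x}) for every x outside [tau t], hence
   through their intersection, which is [tau t].  Since a subset A factors
   through P Z exactly when A is contained in Z, a map c|_S factors through
   F Z iff (tau . c)|_S factors through P Z.  So both coalgebras have the same
   ominus operator, and the steps agree by induction on k. *)

From Stdlib Require Import Classical FunctionalExtensionality PropExtensionality.

Section IntersectionPreserving.

Variable F : setFunctor.
Hypothesis HF : is_functor F.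

Lemma Fimg_mono (Y : Type) (P Q : Y -> Prop) (t : F Y) :
  (forall y, P y -> Q y) -> Fimg F P t -> Fimg F Q t.
Proof.
  intros PQ [s <-].
  exists (fmap F (fun p : {y : Y | P y} => exist Q (proj1_sig p) (PQ _ (proj2_sig p))) s).
  destruct HF as [_ fmap_comp].
  rewrite <- fmap_comp. reflexivity.
Qed.

Lemma tau_sub_of_Fimg (Y : Type) (Z : Y -> Prop) (t : F Y) :
  Fimg F Z t -> forall x, tau F Y t x -> Z x.
Proof.
  intros tZ x tau_x. apply NNPP. intros notZx. apply tau_x.
  apply (Fimg_mono Y Z); [| exact tZ].
  intros y Zy ->. contradiction.
Qed.

Hypothesis Hint : preserves_intersections F.

Lemma Fimg_tau (Y : Type) (t : F Y) : Fimg F (tau F Y t) t.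
Proof.
  destruct Hint as [_ Fimg_cap].
  set (A := fun (j : {x : Y | ~ tau F Y t x}) (y : Y) => y <> proj1_sig j).
  assert (t_cap : Fimg F (fun y => forall j, A j y) t).
  { apply Fimg_cap. intros [x not_tau_x]. exact (NNPP _ not_tau_x). }
  refine (Fimg_mono Y _ _ t _ t_cap).
  intros y Ay. apply NNPP. intros not_tau_y.
  exact (Ay (exist _ y not_tau_y) eq_refl).
Qed.

Lemma Fimg_iff_tau_sub (Y : Type) (Z : Y -> Prop) (t : F Y) :
  Fimg F Z t <-> (forall x, tau F Y t x -> Z x).
Proof.
  split.
  - apply tau_sub_of_Fimg.
  - intros tauZ. exact (Fimg_mono Y _ Z t tauZ (Fimg_tau Y t)).
Qed.

End IntersectionPreserving.

Lemma Fimg_Pow (Y : Type) (Z A : Y -> Prop) :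
  Fimg Pow Z A <-> (forall x, A x -> Z x).
Proof.
  split.
  - intros [s <-] x [[y Zy] [_ <-]]. exact Zy.
  - intros AZ. exists (fun p : {y : Y | Z y} => A (proj1_sig p)).
    apply functional_extensionality. intros y. apply propositional_extensionality.
    split.
    + intros [[y' Zy'] [Ay' <-]]. exact Ay'.
    + intros Ay. exists (exist _ y (AZ y Ay)). split; [exact Ay | reflexivity].
Qed.

Lemma ominus_ext (H H' : setFunctor) (X Y : Type) (f : X -> H Y) (g : X -> H' Y)
    (S S' : X -> Prop) :
  (forall x, S x <-> S' x) ->
  (forall x Z, Fimg H Z (f x) <-> Fimg H' Z (g x)) ->
  forall y, ominus H f S y <-> ominus H' g S' y.
Proof.
  intros SS' fg y. split.
  - intros fy Z gZ. apply fy. intros x Sx. apply fg, gZ, SS', Sx.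
  - intros gy Z fZ. apply gy. intros x S'x. apply fg, fZ, SS', S'x.
Qed.

Lemma kstep_ext (H H' : setFunctor) (I C : Type) (d : C -> H C) (d' : C -> H' C)
    (i : I -> C) :
  (forall x Z, Fimg H Z (d x) <-> Fimg H' Z (d' x)) ->
  forall k x, kstep H d i k x <-> kstep H' d' i k x.
Proof.
  intros dd' k. induction k as [|k IH]; simpl.
  - reflexivity.
  - exact (ominus_ext H H' C C d d' _ _ IH dd').
Qed.

Theorem corollary5p26 (F : setFunctor) (HF : is_functor F)
  (Hint : preserves_intersections F)
  (I C : Type) (c : C -> F C) (iC : I -> C) :
  forall (k : nat) (x : C),
    kstep F c iC k x <-> kstep Pow (fun y => tau F C (c y)) iC k x.
Proof.
  apply kstep_ext. intros x Z.
  rewrite (Fimg_iff_tau_sub F HF Hint), Fimg_Pow.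
  reflexivity.
Qed.
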